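(* Let $Q$ be a finite quiver with $kQ$ of finite GK-dimension, and let $P$ be a point module over $kQ$. Then there is a cyclic vertex $v$ such that $\pi^*P\cong\pi^*\mathcal O_v$ in $\mathrm{QGr}\,kQ$.
   Context: $kQ$ is the path algebra of a finite quiver over a field $k$, graded by path length. A point module is a graded right module $M=\bigoplus_{i\ge0}M_i$ with $M=M_0\,kQ$ and $\dim_kM_i=1$ for all $i\ge0$. $\mathrm{QGr}\,kQ$ is the quotient of graded modules by torsion modules (modules each of whose elements is annihilated by $(kQ)_{\ge n}$ for some $n$), with quotient functor $\pi^*$. With finite GK-dimension each cyclic vertex $v$ lies on a unique simple cycle $p=(v=v_0,a_1,\dots,a_n,v_n=v)$, and $\mathcal O_v=e_vkQ/\bigoplus p^m a_1\cdots a_i b\,kQ$ (sum over $m\ge0$, $0\le i<n$, arrows $b\neq a_{i+1}$ with source $v_i$). *)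

From HB Require Import structures.
From mathcomp Require Import all_boot all_order all_algebra.
Set Implicit Arguments. Unset Strict Implicit. Unset Printing Implicit Defensive.
Import Order.TTheory GRing.Theory Num.Theory.
Local Open Scope ring_scope.

Record quiver := Quiver {
  vert : finType;  arr : finType;
  src : arr -> vert;  tgt : arr -> vert }.

(** A path is (start vertex, arrows a1 ... an), composed left to right:
    src a1 = start, tgt a_i = src a_{i+1}.  Trivial paths e_v = (v, [::]). *)
Definition qpath (Q : quiver) := (vert Q * seq (arr Q))%type.

Definition valid_path (Q : quiver) (q : qpath Q) : bool :=
  match q.2 with
  | [::] => true
  | a :: s => (src a == q.1) && path (fun a b => tgt a == src b) a s
  end.

(** number of paths of length exactly n = dim (kQ)_n *)
Definition npaths (Q : quiver) (n : nat) : nat :=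
  #|[pred vt : (vert Q * n.-tuple (arr Q))%type | valid_path (vt.1, tval vt.2)]|.

(** GKdim kQ = limsup_n log dim (kQ)_{<=n} / log n < oo  (kQ is generated
    by the finite-dimensional space kQ_0 + kQ_1, whose n-th power is kQ_{<=n}). *)
Definition finite_GKdim (Q : quiver) : Prop :=
  exists d N : nat, forall n : nat, (N <= n)%N ->
    (\sum_(j < n.+1) npaths Q j <= n ^ d)%N.

Definition simple_cycle (Q : quiver) (v : vert Q) (c : seq (arr Q)) : Prop :=
  [/\ (0 < size c)%N, valid_path (v, c), last v (map (@tgt Q) c) = v
    & uniq (map (@src Q) c)].

Definition cyclic_vertex (Q : quiver) (v : vert Q) : Prop :=
  exists c, simple_cycle v c.

(** * Graded right kQ-modules
    A right kQ-module is a k-space with operators m |-> m.e_v and m |-> m.a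
    satisfying the defining relations of kQ (e_v e_w = delta e_v,
    sum_v e_v = 1, e_{s a} a e_{t a} = a); the grading puts e_v in degree 0
    and arrows in degree 1. *)
Record gmod (k : fieldType) (Q : quiver) := GMod {
  gcar  : lmodType k;
  gdeg  : nat -> gcar -> Prop;
  gact  : gcar -> arr Q -> gcar;
  gidem : vert Q -> gcar -> gcar }.
Arguments gcar {k Q} g.
Arguments gdeg {k Q} g.
Arguments gact {k Q} g.
Arguments gidem {k Q} g.

Section GMod.
Variables (k : fieldType) (Q : quiver) (M : gmod k Q).
Local Notation T := (gcar M).

Definition pact (m : T) (q : qpath Q) : T := foldl (gact M) (gidem M q.1 m) q.2.

(** m . r  for r = sum c_j q_j in kQ *)
Definition ract (m : T) (r : seq (k * qpath Q)) : T :=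
  \sum_(cq <- r) cq.1 *: pact m cq.2.

Definition subspace (S : T -> Prop) : Prop :=
  S 0 /\ forall (c : k) (x y : T), S x -> S y -> S (c *: x + y).

Definition is_gmod : Prop :=
  (forall a (c : k) (x y : T), gact M (c *: x + y) a = c *: gact M x a + gact M y a) /\
  (forall v (c : k) (x y : T), gidem M v (c *: x + y) = c *: gidem M v x + gidem M v y) /\
  (forall v w (x : T), gidem M v (gidem M w x) = if v == w then gidem M w x else 0) /\
  (forall x : T, x = \sum_(v : vert Q) gidem M v x) /\
  (forall a (x : T), gact M x a = gact M (gidem M (src a) x) a) /\
  (forall a (x : T), gidem M (tgt a) (gact M x a) = gact M x a) /\
  (forall i, subspace (gdeg M i)) /\
  (forall i (x : T), gdeg M i x ->
     (forall a, gdeg M i.+1 (gact M x a)) /\ (forall v, gdeg M i (gidem M v x))) /\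
  (forall x : T, exists (n : nat) (F : nat -> T),
     (forall i, gdeg M i (F i)) /\ x = \sum_(i < n) F i) /\
  (forall (n : nat) (F : nat -> T), (forall i, gdeg M i (F i)) ->
     \sum_(i < n) F i = 0 -> forall i, (i < n)%N -> F i = 0).

Definition gsubmod (S : T -> Prop) : Prop :=
  [/\ subspace S,
      forall x a, S x -> S (gact M x a),
      forall x v, S x -> S (gidem M v x)
    & forall x, S x -> exists (n : nat) (F : nat -> T),
         (forall i, gdeg M i (F i) /\ S (F i)) /\ x = \sum_(i < n) F i].

Definition torsion_elt (x : T) : Prop :=
  exists n : nat, forall q : qpath Q, valid_path q -> (n <= size q.2)%N -> pact x q = 0.

Definition torsion_quot (S : T -> Prop) : Prop :=
  forall x : T, exists n : nat, forall q : qpath Q, valid_path q ->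
    (n <= size q.2)%N -> S (pact x q).

Definition point_module : Prop :=
  [/\ is_gmod,
      (forall x : T, exists s : seq (T * qpath Q),
          (forall yq, yq \in s -> gdeg M 0 yq.1 /\ valid_path yq.2) /\
          x = \sum_(yq <- s) pact yq.1 yq.2)
    & forall i, exists x : T, [/\ gdeg M i x, x <> 0 &
          forall y, gdeg M i y -> exists c : k, y = c *: x]].

End GMod.

Definition coef (k : fieldType) (Q : quiver) (r : seq (k * qpath Q)) (q : qpath Q) : k :=
  \sum_(cq <- r | cq.2 == q) cq.1.

(** basis paths of J = (+)_{m, i, b} p^m a1 ... ai b kQ, p = (v, c) *)
Definition in_J (Q : quiver) (v : vert Q) (c : seq (arr Q)) (q : qpath Q) : Prop :=
  [/\ q.1 = v, valid_path q &
      exists (m i : nat) (b : arr Q) (rest : seq (arr Q)),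
        [/\ (i < size c)%N, b != nth b c i &
            q.2 = flatten (nseq m c) ++ take i c ++ b :: rest]].

(** N is isomorphic (as graded module) to O_v = e_v kQ / J: N is generated by
    x in N_0 with x = x e_v, and the annihilator of x in e_v kQ is exactly J. *)
Definition is_Ov (k : fieldType) (Q : quiver) (v : vert Q) (c : seq (arr Q))
    (N : gmod k Q) : Prop :=
  is_gmod N /\ exists x : gcar N,
  [/\ gdeg N 0 x, gidem N v x = x,
      forall y : gcar N, exists r : seq (k * qpath Q),
        (forall cq, cq \in r -> cq.2.1 = v /\ valid_path cq.2) /\ y = ract x r
    & forall r : seq (k * qpath Q),
        (forall cq, cq \in r -> cq.2.1 = v /\ valid_path cq.2) ->
        (ract x r = 0 <-> forall q, coef r q != 0 -> in_J v c q)].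

(** pi^* M ~= pi^* N in QGr kQ: there are a graded submodule M' of M with
    M/M' torsion, a torsion graded submodule N' of N, and a degree-0
    homomorphism f : M' -> N such that M' -> N -> N/N' has torsion kernel
    and torsion cokernel (a roof representing an isomorphism in the Serre
    quotient Gr kQ / Tors). *)
Definition qgr_iso (k : fieldType) (Q : quiver) (M N : gmod k Q) : Prop :=
  exists (M' : gcar M -> Prop) (N' : gcar N -> Prop) (f : gcar M -> gcar N),
  gsubmod M' /\ torsion_quot M' /\ gsubmod N' /\ (forall y, N' y -> torsion_elt y) /\
  (forall (c : k) x y, M' x -> M' y -> f (c *: x + y) = c *: f x + f y) /\
  (forall x a, M' x -> f (gact M x a) = gact N (f x) a) /\
  (forall x v, M' x -> f (gidem M v x) = gidem N v (f x)) /\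
  (forall i x, M' x -> gdeg M i x -> gdeg N i (f x)) /\
  (forall x, M' x -> N' (f x) -> torsion_elt x) /\
  (forall y : gcar N, exists n : nat, forall q, valid_path q -> (n <= size q.2)%N ->
     exists x y', [/\ M' x, N' y' & pact y q = f x + y']).

From HB Require Import structures.
From mathcomp Require Import all_boot all_order all_algebra.
From mathcomp Require Import zify.
From Stdlib Require Import Classical ClassicalEpsilon.

Set Implicit Arguments. Unset Strict Implicit. Unset Printing Implicit Defensive.
Import GRing.Theory.

(* Finite GK-dimension forbids two distinct closed paths of the same length at
   a vertex: words in them would give exponentially many paths.  A point module
   P has one-dimensional pieces P_i with P_i a_i = P_(i+1) for some arrow a_i,
   so the a_i form an infinite walk in Q.  By the prohibition this walk is
   eventually periodic along a simple cycle p at some vertex v, and from some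
   degree n0 on, a_i is the only arrow between consecutive vertices of p.
   Choosing b_(i+1) = b_i a_i for i >= n0 identifies P_(>= n0), degree by degree,
   with the tail of O_v; what is left over on either side is torsion. *)

(** * Closed paths under finite GK-dimension *)

Lemma sqr_leq_exp2 t : 4 <= t -> t * t <= 2 ^ t.
Proof.
elim: t => // t IH; rewrite leq_eqVlt => /orP [/eqP <- //| Ht].
have {}IH := IH Ht; rewrite expnS; nia.
Qed.

Lemma exists_mul_poly_lt_exp2 d N L : 0 < L ->
  exists m, N <= m * L /\ (m * L) ^ d < 2 ^ m.
Proof.
move=> L_gt0; set t := 4 + 2 * d + L + N.
have ht : t < 2 ^ t by apply: ltn_expl.
have hL : L < 2 ^ L by apply: ltn_expl.
exists (2 ^ t); split.
  have : t <= 2 ^ t * L by nia.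
  by rewrite /t; lia.
have mL_le : (2 ^ t * L) ^ d <= (2 ^ (t + L)) ^ d.
  have exp_mono e a b : a <= b -> a ^ e <= b ^ e.
    by case: e => [|e] hab; rewrite ?expn0 ?leq_exp2r.
  by apply: exp_mono; rewrite expnD leq_mul2l ltnW ?orbT.
apply: (leq_ltn_trans mL_le); rewrite -expnM ltn_exp2l //.
have : t * t <= 2 ^ t by apply: sqr_leq_exp2; rewrite /t; lia.
rewrite /t; nia.
Qed.

Lemma ex_minn_classic (P : nat -> Prop) :
  (exists n, P n) -> exists n, P n /\ forall m, m < n -> ~ P m.
Proof.
move=> [n Pn]; elim: n {-2}n (leqnn n) Pn => [|N IH] n hn Pn.
  by exists n; split => // m; move: hn; lia.
case: (classic (exists m, m < n /\ P m)) => [[m [hm Pm]]|H].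
  by apply: (IH m) => //; lia.
by exists n; split => // m hm Pm; apply: H; exists m.
Qed.

Section Paths.
Variable Q : quiver.
Implicit Types (u : vert Q) (p q : seq (arr Q)).

Definition path_end u p := last u (map (@tgt Q) p).

Lemma valid_cons u a p :
  valid_path (u, a :: p) = (src a == u) && valid_path (tgt a, p).
Proof. by case: p => [|b p]; rewrite /valid_path //= [src b == _]eq_sym. Qed.

Lemma valid_cat u p q :
  valid_path (u, p ++ q) = valid_path (u, p) && valid_path (path_end u p, q).
Proof. by elim: p u => [|a p IH] u //=; rewrite !valid_cons IH andbA. Qed.

Lemma path_end_cat u p q : path_end u (p ++ q) = path_end (path_end u p) q.
Proof. by rewrite /path_end map_cat last_cat. Qed.

Lemma path_end_cons u a p : path_end u (a :: p) = path_end (tgt a) p.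
Proof. by []. Qed.

Lemma valid_nth a0 u p i : valid_path (u, p) -> i.+1 < size p ->
  tgt (nth a0 p i) = src (nth a0 p i.+1).
Proof.
elim: p u i => // a p IH u i; rewrite valid_cons => /andP [_ hv].
case: i => [|i] /=; last by move=> hi; apply: (IH _ _ hv).
by case: p {IH} hv => // b p; rewrite valid_cons => /andP [/eqP ->].
Qed.

Lemma card_valid_leq_npaths n (A : {set vert Q * n.-tuple (arr Q)}) :
  {in A, forall vt, valid_path (vt.1, tval vt.2)} -> #|A| <= npaths Q n.
Proof.
move=> HA; apply: subset_leq_card; apply/subsetP => vt /HA.
by rewrite inE.
Qed.

Section Words.
Variables (u : vert Q) (p1 p2 : seq (arr Q)).

Definition word (bs : seq bool) := flatten [seq if b then p1 else p2 | b <- bs].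

Hypotheses (v1 : valid_path (u, p1)) (v2 : valid_path (u, p2))
  (e1 : path_end u p1 = u) (e2 : path_end u p2 = u).

Lemma word_closed bs : valid_path (u, word bs) && (path_end u (word bs) == u).
Proof.
elim: bs => [|b bs IH] //=; case/andP: IH => IH1 /eqP IH2.
by case: b; rewrite valid_cat path_end_cat ?e1 ?e2 ?v1 ?v2 IH1 IH2 /= eqxx.
Qed.

Hypothesis s12 : size p1 = size p2.

Lemma size_word bs : size (word bs) = size bs * size p1.
Proof.
elim: bs => [|b bs IH] //=; rewrite size_cat IH mulSn.
by case: b; rewrite ?s12.
Qed.

Lemma word_inj bs1 bs2 : p1 != p2 ->
  size bs1 = size bs2 -> word bs1 = word bs2 -> bs1 = bs2.
Proof.
move=> n12; elim: bs1 bs2 => [|b1 bs1 IH] [|b2 bs2] //= [] hs /eqP.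
rewrite eqseq_cat; last by case: b1; case: b2.
case/andP => /eqP hb /eqP hw; rewrite (IH _ hs hw); congr (_ :: _).
by move: hb n12; case: b1; case: b2 => // ->; rewrite eqxx.
Qed.

End Words.

(* Two distinct closed paths of length L at u would give 2^m closed paths of
   length m L, one for each boolean word of length m. *)
Lemma closed_paths_eq u p1 p2 : finite_GKdim Q ->
  valid_path (u, p1) -> valid_path (u, p2) ->
  path_end u p1 = u -> path_end u p2 = u ->
  size p1 = size p2 -> 0 < size p1 -> p1 = p2.
Proof.
move=> [d [N HN]] v1 v2 e1 e2 s12 L_gt0.
apply/eqP; apply/negPn/negP => n12.
have [m [Nm Hm]] := exists_mul_poly_lt_exp2 d N L_gt0.
set L := size p1 in Nm Hm L_gt0.
have szw (t : m.-tuple bool) : size (word p1 p2 t) == m * L.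
  by rewrite (size_word s12) size_tuple.
pose G (t : m.-tuple bool) := (u, Tuple (szw t)).
have G_inj : injective G.
  move=> t1 t2 [] /(word_inj s12 n12) h; apply: val_inj; apply: h.
  by rewrite !size_tuple.
have : #|[set G t | t in [set: m.-tuple bool]]| <= npaths Q (m * L).
  apply: card_valid_leq_npaths => _ /imsetP [t _ ->] /=.
  by case/andP: (word_closed v1 v2 e1 e2 t).
rewrite card_imset // cardsT card_tuple card_bool => hcard.
have : npaths Q (m * L) <= \sum_(j < (m * L).+1) npaths Q j.
  by rewrite big_ord_recr /= leq_addl.
have := HN _ Nm; lia.
Qed.

Lemma closed_paths_commute u p1 p2 : finite_GKdim Q ->
  valid_path (u, p1) -> valid_path (u, p2) ->
  path_end u p1 = u -> path_end u p2 = u ->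
  0 < size p1 -> p1 ++ p2 = p2 ++ p1.
Proof.
move=> GK v1 v2 e1 e2 p1_gt0.
apply: (@closed_paths_eq u); rewrite ?valid_cat ?path_end_cat ?v1 ?v2 ?e1 ?e2 //.
- by rewrite !size_cat addnC.
- by rewrite size_cat addn_gt0 p1_gt0.
Qed.

End Paths.

(** * Eventually periodic walks *)

Lemma mkseq_cons T (f : nat -> T) n : mkseq f n.+1 = f 0 :: mkseq (f \o succn) n.
Proof.
by rewrite /mkseq /= -[1]addn0 iotaDl -map_comp; congr cons.
Qed.

Section Walk.
Variables (Q : quiver) (al : nat -> arr Q).
Hypothesis al_link : forall i, tgt (al i) = src (al i.+1).

Definition visit i := src (al i).
Definition segment s L := mkseq (fun j => al (s + j)) L.

Lemma segmentS s L : segment s L.+1 = al s :: segment s.+1 L.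
Proof.
by rewrite /segment mkseq_cons addn0; congr cons; apply: eq_mkseq => j /=; rewrite addSnnS.
Qed.

Lemma size_segment s L : size (segment s L) = L.
Proof. exact: size_mkseq. Qed.

Lemma nth_segment a s L j : j < L -> nth a (segment s L) j = al (s + j).
Proof. exact: nth_mkseq. Qed.

Lemma take_segment n s L : n <= L -> take n (segment s L) = segment s n.
Proof.
move=> nL; have sz : size (take n (segment s L)) = n by rewrite size_takel ?size_segment.
apply: (@eq_from_nth _ (al 0)); first by rewrite sz size_segment.
move=> j; rewrite sz => jn.
by rewrite nth_take // !nth_segment // (leq_trans jn).
Qed.

Lemma segment_valid s L : valid_path (visit s, segment s L).
Proof.
by elim: L s => // L IH s; rewrite segmentS valid_cons eqxx al_link; apply: IH.
Qed.

Lemma segment_end s L : path_end (visit s) (segment s L) = visit (s + L).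
Proof.
elim: L s => [|L IH] s; first by rewrite addn0.
by rewrite segmentS path_end_cons al_link IH addSnnS.
Qed.

Lemma recurrent_vertex : exists u, forall N, exists2 s, N <= s & visit s = u.
Proof.
apply: NNPP => Hnot.
have [bound Hbound] : exists bound : vert Q -> nat,
    forall u s, bound u <= s -> visit s != u.
  apply: (@ClassicalEpsilon.choice _ _ (fun u b => forall s, b <= s -> visit s != u)).
  move=> u; apply: NNPP => Hu; apply: Hnot; exists u => N.
  apply: NNPP => HN; apply: Hu; exists N => s Ns; apply/eqP => e; apply: HN.
  by exists s.
set N := \max_u bound u.
by have := Hbound _ N (leq_bigmax (visit N)); rewrite eqxx.
Qed.

Section Return.
Variable u : vert Q.
Hypothesis GK : finite_GKdim Q.

Definition first_return r r' :=
  [/\ r < r', visit r = u, visit r' = u & forall x, r < x < r' -> visit x != u].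

Hypothesis recurrent : forall N, exists2 s, N <= s & visit s = u.

Lemma exists_first_return r : visit r = u -> exists r', first_return r r'.
Proof.
move=> ru; have ex : exists r', (r < r') && (visit r' == u).
  by have [r' r'_ge r'u] := recurrent r.+1; exists r'; rewrite r'_ge r'u eqxx.
case: (ex_minnP ex) => r' /andP [r_lt /eqP r'u] r'_min; exists r'; split => //.
move=> x /andP [r_x x_r']; apply/negP => /eqP xu.
by have := r'_min x; rewrite r_x xu eqxx => /(_ isT); rewrite leqNgt x_r'.
Qed.

Lemma first_return_closed r r' : first_return r r' ->
  valid_path (u, segment r (r' - r)) /\ path_end u (segment r (r' - r)) = u.
Proof.
case=> r_lt ru r'u _.
by rewrite -ru segment_valid segment_end subnKC ?(ltnW r_lt) // r'u.
Qed.

(* Two closed paths commute; comparing prefixes shows that a shorter first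
   return would make the longer one pass through [u] too early. *)
Lemma first_returns_agree r r' s s' : first_return r r' -> first_return s s' ->
  segment r (r' - r) = segment s (s' - s).
Proof.
wlog le : r r' s s' / r' - r <= s' - s.
  move=> Hw hr hs; case: (leqP (r' - r) (s' - s)) => h; first exact: Hw.
  by apply/esym/Hw => //; apply: ltnW.
move=> ret_r ret_s; have [vr er] := first_return_closed ret_r.
have [vs es] := first_return_closed ret_s.
case: ret_r ret_s => r_lt _ _ _ [s_lt su _ s_min].
set L := r' - r in le vr er *; set L' := s' - s in le vs es *.
have L_gt0 : 0 < L by rewrite /L subn_gt0.
case: (ltngtP L L') le => // [lt|eqL] _; last first.
  apply: (closed_paths_eq GK vr vs er es); rewrite !size_segment // eqL.
have := closed_paths_commute GK vr vs er es; rewrite size_segment => /(_ L_gt0).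
move/(congr1 (take L)); rewrite take_size_cat ?size_segment //.
rewrite takel_cat ?size_segment ?(ltnW lt) // take_segment ?(ltnW lt) // => eseg.
have suL : visit (s + L) = u by rewrite -segment_end su -eseg.
have /negP[] : visit (s + L) != u.
  by apply: s_min; rewrite /L' in lt; apply/andP; split; lia.
by rewrite suL.
Qed.

End Return.

Definition periodic_from t0 g := forall t, t0 <= t -> al (t + g) = al t.

Lemma periodic_from_mul t0 g m : periodic_from t0 g -> periodic_from t0 (m * g).
Proof.
move=> hp; elim: m => [|m IH] t ht; first by rewrite mul0n addn0.
by rewrite mulSn (addnC g) addnA hp ?IH // (leq_trans ht) ?leq_addr.
Qed.

Lemma eventually_periodic : finite_GKdim Q -> exists t0 L, 0 < L /\ periodic_from t0 L.
Proof.
move=> GK; have [u recurrent] := recurrent_vertex.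
have [t0 _ t0u] := recurrent 0.
have [t1 ret01] := exists_first_return recurrent t0u.
set L := t1 - t0.
have L_gt0 : 0 < L by case: ret01 => r_lt _ _ _; rewrite subn_gt0.
have step s : visit s = u -> visit (s + L) = u /\ segment s L = segment t0 L.
  move=> su; have [s' ret_s] := exists_first_return recurrent su.
  have eseg := first_returns_agree GK ret01 ret_s.
  have eL : s' - s = L by rewrite -(size_segment t0 L) eseg size_segment.
  case: ret_s => s_lt _ s'u _; split; first by rewrite -eL subnKC ?(ltnW s_lt).
  by rewrite -{1}eL -eseg.
have al_eq s j : visit s = u -> j < L -> al (s + j) = al (t0 + j).
  move=> su jL; rewrite -(nth_segment (al 0) s jL) -(nth_segment (al 0) t0 jL).
  by rewrite (step s su).2.
have visit_t0 m : visit (t0 + m * L) = u.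
  elim: m => [|m IH]; first by rewrite addn0.
  by rewrite mulSn (addnC L) addnA (step _ IH).1.
exists t0, L; split => // t t0_t.
have jL : (t - t0) %% L < L by rewrite ltn_mod.
rewrite -(subnKC t0_t) (divn_eq (t - t0) L) addnA addnAC -(addnA t0) -mulSnr.
by rewrite al_eq ?visit_t0 // [RHS]al_eq ?visit_t0.
Qed.

Section MinimalPeriod.
Hypothesis GK : finite_GKdim Q.
Variables (t0 p : nat).
Hypotheses (p_gt0 : 0 < p) (p_period : periodic_from t0 p)
  (p_min : forall g, g < p -> ~ (0 < g /\ periodic_from t0 g)).

Lemma periodic_mod i x : t0 <= i -> al (i + x) = al (i + x %% p).
Proof.
move=> t0_i; rewrite {1}(divn_eq x p) addnCA addnC (periodic_from_mul _ p_period) //.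
exact: leq_trans t0_i (leq_addr _ _).
Qed.

Lemma segment_period_closed i : t0 <= i ->
  valid_path (visit i, segment i p) /\ path_end (visit i) (segment i p) = visit i.
Proof. by move=> t0_i; rewrite segment_valid segment_end /visit p_period. Qed.

(* A repeated vertex inside one period yields a second closed path of length
   [p] at the same vertex, hence a smaller period. *)
Lemma period_visits_distinct i g : t0 <= i -> 0 < g < p -> visit (i + g) != visit i.
Proof.
move=> t0_i /andP [g_gt0 g_lt]; apply/negP => /eqP e.
have t0_ig : t0 <= i + g by rewrite (leq_trans t0_i) ?leq_addr.
have eseg : segment i p = segment (i + g) p.
  have [v1 e1] := segment_period_closed t0_i.
  have [v2 e2] := segment_period_closed t0_ig; rewrite e in v2 e2.
  by apply: (closed_paths_eq GK v1 v2 e1 e2); rewrite !size_segment.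
have per_i t : i <= t -> al (t + g) = al t.
  move=> it; have hx : (t - i) %% p < p by rewrite ltn_pmod.
  rewrite -(subnKC it) addnAC (periodic_mod _ t0_ig) (periodic_mod _ t0_i).
  by rewrite -(nth_segment (al 0) (i + g) hx) -eseg nth_segment.
apply: (p_min g_lt); split => // t t0_t.
have per_ip := periodic_from_mul i p_period.
have i_le : i <= t + i * p by rewrite (leq_trans _ (leq_addl _ _)) // leq_pmulr.
by rewrite -(per_ip t t0_t) -(per_ip (t + g)) ?(leq_trans t0_t) ?leq_addr // addnAC per_i.
Qed.

Lemma period_arrow_unique i a : t0 <= i ->
  src a = visit i -> tgt a = visit i.+1 -> a = al i.
Proof.
move=> t0_i sa ta; have [vi ei] := segment_period_closed t0_i.
have va : valid_path (visit i, a :: segment i.+1 p.-1).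
  by rewrite valid_cons sa eqxx ta segment_valid.
have ea : path_end (visit i) (a :: segment i.+1 p.-1) = visit i.
  by rewrite path_end_cons ta segment_end addSnnS prednK // -segment_end ei.
have := closed_paths_eq GK va vi ea ei.
rewrite /= !size_segment prednK // => /(_ erefl p_gt0).
by rewrite -(prednK p_gt0) segmentS => -[].
Qed.

Lemma period_simple_cycle n : t0 <= n -> simple_cycle (visit n) (segment n p).
Proof.
move=> t0_n; have [vn en] := segment_period_closed t0_n.
split; rewrite ?size_segment //.
rewrite -map_comp; apply/(mkseq_uniqP (fun j => visit (n + j))) => j j'.
rewrite !unfold_in /= => jp j'p e; apply/eqP; apply: contraT => ne.
wlog lt : j j' jp j'p e ne / j < j'.
  move=> Hw; case: (ltngtP j j') => h; first exact: (Hw j j' jp j'p e ne h).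
  - by apply: (Hw j' j j'p jp (esym e)); rewrite // eq_sym.
  - by rewrite h eqxx in ne.
have t0_nj : t0 <= n + j by rewrite (leq_trans t0_n) ?leq_addr.
have g_bounds : 0 < j' - j < p by apply/andP; split; lia.
by have := period_visits_distinct t0_nj g_bounds; rewrite -addnA subnKC ?(ltnW lt) // e eqxx.
Qed.

Lemma period_nth n i : t0 <= n -> p %| n -> n <= i ->
  al i = nth (al 0) (segment n p) (i %% p).
Proof.
move=> t0_n /dvdnP [q n_eq] ni.
rewrite nth_segment ?ltn_pmod // -(subnKC ni) periodic_mod //.
by congr (al (_ + _)); rewrite n_eq modnMDl.
Qed.

End MinimalPeriod.

Lemma walk_eventually_cycles : finite_GKdim Q -> exists n0 l,
  [/\ simple_cycle (visit n0) (segment n0 l),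
       forall i, n0 <= i -> al i = nth (al 0) (segment n0 l) (i %% l)
     & forall i a, n0 <= i -> src a = visit i -> tgt a = visit i.+1 -> a = al i].
Proof.
move=> GK; have [t0 [L [L_gt0 L_per]]] := eventually_periodic GK.
have [p [[p_gt0 p_per] p_min]] :=
  @ex_minn_classic (fun g => 0 < g /\ periodic_from t0 g) (ex_intro _ L (conj L_gt0 L_per)).
have t0_n : t0 <= t0 * p by rewrite leq_pmulr.
exists (t0 * p), p; split.
- exact: (period_simple_cycle GK p_gt0 p_per p_min t0_n).
- by move=> i; apply: (period_nth p_gt0 p_per t0_n (dvdn_mull _ (dvdnn p))).
- by move=> i a ni; apply: (period_arrow_unique GK p_gt0 p_per (leq_trans t0_n ni)).
Qed.

End Walk.

(** * The module O_v *)

Lemma size_flatten_nseq T (s : seq T) m : size (flatten (nseq m s)) = m * size s.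
Proof. by elim: m => //= m IH; rewrite size_cat IH mulSn. Qed.

Lemma nth_flatten_nseq T (x : T) s m j : j < m * size s ->
  nth x (flatten (nseq m s)) j = nth x s (j %% size s).
Proof.
elim: m j => // m IH j; rewrite mulSn /= nth_cat => hj.
case: ltnP => h; first by rewrite modn_small.
rewrite IH; last by move: hj h; lia.
by rewrite -[in RHS](subnK h) modnDr.
Qed.

Lemma coef_neq0_mem (k : fieldType) (Q : quiver) (r : seq (k * qpath Q)) q :
  coef r q != 0%R -> exists2 cq, cq \in r & cq.2 = q.
Proof.
move=> nz; have /hasP [cq cq_r /eqP] : has (fun cq => cq.2 == q) r.
  by apply: contraNT nz => no_q; rewrite /coef big_hasC.
by exists cq.
Qed.

Section CycleModule.
Variables (k : fieldType) (Q : quiver) (v : vert Q) (c : seq (arr Q)) (a0 : arr Q).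
Hypothesis c_cycle : simple_cycle v c.
Local Notation l := (size c).

Definition cyc j := nth a0 c (j %% l).

Lemma size_cycle_gt0 : 0 < l. Proof. by case: c_cycle. Qed.

Lemma visit_cyc0 : visit cyc 0 = v.
Proof.
rewrite /visit /cyc mod0n; case: c_cycle; case: c => // a s _.
by rewrite valid_cons => /andP [/eqP -> _].
Qed.

Lemma cyc_link j : tgt (cyc j) = src (cyc j.+1).
Proof.
rewrite /cyc; case: c_cycle => l_gt0 c_valid c_end _.
have jl : j %% l < l by rewrite ltn_mod.
have -> : j.+1 %% l = (j %% l).+1 %% l by rewrite -addn1 -modnDml addn1.
case: (ltngtP (j %% l).+1 l) => h.
- by rewrite (modn_small h) (valid_nth _ c_valid).
- by move: h; rewrite ltnS leqNgt jl.
- have := visit_cyc0; rewrite /visit /cyc mod0n => e0.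
  rewrite h modnn e0 -[in RHS]c_end.
  have -> : j %% l = (size c).-1 by rewrite -[in RHS]h.
  rewrite -(nth_map a0 v); last by rewrite prednK.
  by rewrite -(size_map (@tgt Q) c) nth_last.
Qed.

Definition cyc_prefix n := segment cyc 0 n.

Lemma cyc_prefix_valid n : valid_path (v, cyc_prefix n).
Proof. by rewrite -visit_cyc0 segment_valid // => j; apply: cyc_link. Qed.

Lemma cyc_prefix_split m i : i < l ->
  cyc_prefix (m * l + i) = flatten (nseq m c) ++ take i c.
Proof.
move=> il; apply: (@eq_from_nth _ a0).
  by rewrite size_segment size_cat size_flatten_nseq size_takel // ltnW.
move=> j; rewrite size_segment => hj.
rewrite nth_segment // add0n /cyc nth_cat size_flatten_nseq.
case: ltnP => h; first by rewrite nth_flatten_nseq.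
have jr : j - m * l < i by lia.
by rewrite nth_take // -[in LHS](subnKC h) modnMDl modn_small //; lia.
Qed.

Lemma cyc_prefix_notin_J i : ~ in_J v c (v, cyc_prefix i).
Proof.
case=> _ _ [m [j [b [rest [jl bj e]]]]].
have mji : m * l + j < i.
  have := congr1 size e; rewrite size_segment !size_cat size_flatten_nseq.
  by rewrite size_takel ?(ltnW jl) //=; lia.
have := congr1 (fun s => nth a0 s (m * l + j)) e.
rewrite /= nth_segment // add0n /cyc modnMDl modn_small // nth_cat size_flatten_nseq.
rewrite ltnNge leq_addr /= addKn nth_cat size_takel ?(ltnW jl) // ltnn subnn /= => eb.
by rewrite (set_nth_default a0 b jl) eb eqxx in bj.
Qed.

(* A path from v leaves p^oo at its first deviation, which exhibits it as a
   basis path of J. *)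
Lemma in_J_off_prefix p : valid_path (v, p) -> p != cyc_prefix (size p) -> in_J v c (v, p).
Proof.
move=> vp ne; split => //.
have ex : exists t, (t < size p) && (nth a0 p t != cyc t).
  apply: NNPP => H; move/negP: ne; apply; apply/eqP; apply: (@eq_from_nth _ a0).
    by rewrite size_segment.
  move=> t tp; rewrite nth_segment // add0n; apply/eqP; apply: contraT => h.
  by exfalso; apply: H; exists t; rewrite tp h.
case: (ex_minnP ex) => t /andP [tp t_dev] t_min.
have tl : t %% l < l by rewrite ltn_mod size_cycle_gt0.
exists (t %/ l), (t %% l), (nth a0 p t), (drop t.+1 p); split => //.
  by rewrite (set_nth_default a0 _ tl).
rewrite catA -cyc_prefix_split // -divn_eq -(drop_nth a0 tp).
have -> : cyc_prefix t = take t p.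
  apply: (@eq_from_nth _ a0); first by rewrite size_segment size_takel // (ltnW tp).
  move=> s; rewrite size_segment => st; rewrite nth_segment // add0n nth_take //.
  apply/eqP; apply: contraT; rewrite eq_sym => h.
  by have := t_min s; rewrite h (ltn_trans st tp) /= leqNgt st => /(_ isT).
by rewrite cat_take_drop.
Qed.

Local Open Scope ring_scope.

Definition select (P : pred nat) (x : {poly k}) : {poly k} :=
  \poly_(j < size x) (if P j then x`_j else 0).

Lemma coef_select P x j : (select P x)`_j = if P j then x`_j else 0.
Proof.
rewrite coef_poly; case: ltnP => // h.
by case: (P j); rewrite // nth_default.
Qed.

Definition cyc_act (x : {poly k}) (a : arr Q) := select (fun j => cyc j == a) x * 'X.
Definition cyc_idem (u : vert Q) (x : {poly k}) := select (fun j => visit cyc j == u) x.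
Definition monomial_deg (i : nat) (x : {poly k}) := exists b : k, x = b *: 'X^i.

(* O_v realised on k[X]: X^j is the class of the prefix of p^oo of length j. *)
Definition cycle_module : gmod k Q := @GMod k Q {poly k} monomial_deg cyc_act cyc_idem.

Lemma coef_cyc_act x a j :
  (cyc_act x a)`_j = if j == 0%N then 0 else if cyc j.-1 == a then x`_j.-1 else 0.
Proof. by rewrite /cyc_act coefMX coef_select. Qed.

Lemma coef_cyc_idem u x j : (cyc_idem u x)`_j = if visit cyc j == u then x`_j else 0.
Proof. exact: coef_select. Qed.

Lemma cyc_act_Xn j a : cyc_act 'X^j a = if cyc j == a then 'X^(j.+1) else 0.
Proof.
apply/polyP => i; rewrite coef_cyc_act; case: i => [|i] /=.
  by case: ifP; rewrite ?coef0 // coefXn.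
rewrite coefXn; case: (eqVneq i j) => [->|ne].
  by case: (cyc j == a); rewrite ?coef0 // coefXn eqxx.
by case: (cyc i == a); case: (cyc j == a); rewrite ?coef0 ?coefXn ?eqSS ?(negbTE ne).
Qed.

Lemma cyc_act0 a : cyc_act 0 a = 0.
Proof. by rewrite /cyc_act /select size_poly0 poly_def big_ord0 mul0r. Qed.

Lemma foldl_cyc_act0 p : foldl cyc_act 0 p = 0.
Proof. by elim: p => //= a p IH; rewrite cyc_act0. Qed.

Lemma foldl_cyc_act_Xn p j : foldl cyc_act 'X^j p =
  if p == segment cyc j (size p) then 'X^(j + size p) else 0.
Proof.
elim: p j => [|a p IH] j /=; first by rewrite addn0.
rewrite cyc_act_Xn segmentS eqseq_cons eq_sym.
case: eqP => _ /=; last by rewrite foldl_cyc_act0.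
by rewrite IH addSnnS.
Qed.

Lemma coef_foldl_cyc_act_low z p i : (i < size p)%N -> (foldl cyc_act z p)`_i = 0.
Proof.
elim/last_ind: p i => // p a IH i; rewrite size_rcons foldl_rcons coef_cyc_act.
by case: i => [|i] //= hi; case: ifP => // _; apply: IH.
Qed.

Lemma monomial_decomposition (x : {poly k}) :
  x = \sum_(i < size x) x`_i *: 'X^i.
Proof. by rewrite -poly_def coefK. Qed.

Lemma monomial_sum_eq0 n (F : nat -> {poly k}) :
  (forall i, monomial_deg i (F i)) -> \sum_(i < n) F i = 0 ->
  forall i, (i < n)%N -> F i = 0.
Proof.
move=> homF sum0 i lt_in.
have F_coef j : F j = (F j)`_j *: 'X^j.
  by case: (homF j) => b ->; rewrite coefZ coefXn eqxx mulr1.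
have := congr1 (fun p : {poly k} => p`_i) sum0; rewrite coef_sum coef0.
rewrite (bigD1 (Ordinal lt_in)) //= big1 ?addr0 => [e|j ne_ji].
  by rewrite (F_coef i) e scale0r.
rewrite (F_coef j) coefZ coefXn; case: eqP => [e|]; rewrite ?mulr0 //.
by move: ne_ji; rewrite -val_eqE /= -e eqxx.
Qed.

Lemma cycle_module_gmod : is_gmod cycle_module.
Proof.
rewrite /is_gmod /cycle_module /=.
refine (conj _ (conj _ (conj _ (conj _ (conj _ (conj _ (conj _ (conj _ (conj _ _))))))))).
- move=> a b x y; apply/polyP => j; rewrite coefD coefZ !coef_cyc_act coefD coefZ.
  by case: ifP => _; rewrite ?mulr0 ?addr0 //; case: ifP => _; rewrite ?mulr0 ?addr0.
- move=> u b x y; apply/polyP => j; rewrite coefD coefZ !coef_cyc_idem coefD coefZ.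
  by case: ifP => _; rewrite ?mulr0 ?addr0.
- move=> u u' x; case: eqP => [<-|ne]; apply/polyP => j; rewrite !coef_cyc_idem ?coef0.
    by case: (visit cyc j == u).
  case: (eqVneq (visit cyc j) u) => [->|] //.
  by rewrite (negbTE (introN eqP ne)).
- move=> x; apply/polyP => j; rewrite coef_sum (bigD1 (visit cyc j)) //= coef_cyc_idem eqxx.
  rewrite big1 ?addr0 // => u hu; rewrite coef_cyc_idem; case: eqP => // e.
  by rewrite e eqxx in hu.
- move=> a x; apply/polyP => j; rewrite !coef_cyc_act coef_cyc_idem.
  by case: ifP => // _; case: eqP => // <-; rewrite /visit eqxx.
- move=> a x; apply/polyP => j; rewrite coef_cyc_idem !coef_cyc_act.
  case: j => [|j] /=; first by case: ifP.
  case: (eqVneq (cyc j) a) => [<-|_]; first by rewrite /visit -cyc_link eqxx.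
  by case: ifP.
- move=> i; split; first by exists 0; rewrite scale0r.
  by move=> b x y [bx ->] [b2 ->]; exists (b * bx + b2); rewrite scalerDl scalerA.
- move=> i x [b ->]; split.
    move=> a; exists (if cyc i == a then b else 0); apply/polyP => j.
    rewrite coef_cyc_act !coefZ !coefXn; case: j => [|j] /=; first by rewrite mulr0.
    by rewrite eqSS; case: (eqVneq j i) => [->|_]; case: ifP; rewrite ?mulr0 ?mul0r.
  move=> u; exists (if visit cyc i == u then b else 0); apply/polyP => j.
  rewrite coef_cyc_idem !coefZ !coefXn; case: (eqVneq j i) => [->|ne]; case: ifP;
    rewrite ?mul0r ?mulr0 //.
- move=> x; exists (size x), (fun i => x`_i *: 'X^i); split; first by move=> i; exists x`_i.
  exact: monomial_decomposition.
- exact: monomial_sum_eq0.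
Qed.

Lemma cyc_idem_one : cyc_idem v 1 = 1.
Proof.
apply/polyP => j; rewrite coef_cyc_idem coef1.
by case: j => [|j]; [rewrite visit_cyc0 eqxx | case: ifP].
Qed.

Lemma pact_one p : pact (M := cycle_module) 1 (v, p) =
  if p == cyc_prefix (size p) then 'X^(size p) else 0.
Proof. by rewrite /pact /= cyc_idem_one -(expr0 'X) foldl_cyc_act_Xn. Qed.

Lemma coef_pact_one p i : (pact (M := cycle_module) 1 (v, p))`_i = (p == cyc_prefix i)%:R.
Proof.
have -> : (p == cyc_prefix i) = (p == cyc_prefix (size p)) && (i == size p).
  apply/eqP/andP => [->|[/eqP e /eqP ->] //].
  by rewrite /cyc_prefix size_segment !eqxx.
by rewrite pact_one; case: (p == _); rewrite ?coefXn ?coef0.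
Qed.

Lemma coef_ract_one r i : (forall cq, cq \in r -> cq.2.1 = v) ->
  (ract (M := cycle_module) 1 r)`_i = coef r (v, cyc_prefix i).
Proof.
move=> r_v; rewrite /ract coef_sum /coef big_mkcond [RHS]big_mkcond /=.
apply: eq_big_seq => -[b [u p]] /r_v /= ->; rewrite coefZ coef_pact_one xpair_eqE eqxx /=.
by case: eqP; rewrite ?mulr1 ?mulr0.
Qed.

Lemma cycle_module_Ov : is_Ov v c cycle_module.
Proof.
split; first exact: cycle_module_gmod.
exists 1; split.
- by exists 1; rewrite scale1r expr0.
- exact: cyc_idem_one.
- move=> y; exists [seq (y`_i, (v, cyc_prefix i)) | i <- iota 0 (size y)]; split.
    by move=> cq /mapP [i _ ->]; split => //; apply: cyc_prefix_valid.
  rewrite /ract big_map (eq_bigr (fun i => y`_i *: 'X^i)); last first.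
    by move=> i _; rewrite /= pact_one /cyc_prefix size_segment eqxx.
  by rewrite -{1}(subn0 (size y)) -/(index_iota 0 (size y)) big_mkord -monomial_decomposition.
move=> r r_v; have r_v1 cq : cq \in r -> cq.2.1 = v by move/r_v => [].
split=> [ract0 q|inJ].
- move=> /[dup] /coef_neq0_mem [[b [u p]] cq_r <-] /=.
  have [/= -> vp] := r_v _ cq_r.
  case: (eqVneq p (cyc_prefix (size p))) => [ep|ne] coef_nz; last exact: in_J_off_prefix.
  by move: coef_nz; rewrite ep -coef_ract_one // ract0 coef0 eqxx.
- apply/polyP => i; rewrite coef0 coef_ract_one //; apply/eqP; apply: contraT => nz.
  by case: (cyc_prefix_notin_J (inJ _ nz)).
Qed.

End CycleModule.

Local Open Scope ring_scope.

(** * Homogeneous components *)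

Lemma sum_widen (V : nmodType) n N (F : nat -> V) : (n <= N)%N ->
  \sum_(i < n) F i = \sum_(i < N) (if (i < n)%N then F i else 0).
Proof. by move=> h; rewrite (big_ord_widen N) // big_mkcond. Qed.

Section GradedModule.
Variables (k : fieldType) (Q : quiver) (M : gmod k Q).
Hypothesis M_gmod : is_gmod M.
Local Notation T := (gcar M).
Local Notation deg := (gdeg M).
Local Notation act := (gact M).
Local Notation idem := (gidem M).

Lemma act_linear a c (x y : T) : act (c *: x + y) a = c *: act x a + act y a.
Proof. by case: M_gmod => h _; apply: h. Qed.
Lemma idem_linear u c (x y : T) : idem u (c *: x + y) = c *: idem u x + idem u y.
Proof. by case: M_gmod => _ [h _]; apply: h. Qed.
Lemma idem_idem u u' (x : T) : idem u (idem u' x) = if u == u' then idem u' x else 0.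
Proof. by case: M_gmod => _ [_ [h _]]; apply: h. Qed.
Lemma sum_idem (x : T) : x = \sum_(u : vert Q) idem u x.
Proof. by case: M_gmod => _ [_ [_ [h _]]]; apply: h. Qed.
Lemma act_idem_src a (x : T) : act x a = act (idem (src a) x) a.
Proof. by case: M_gmod => _ [_ [_ [_ [h _]]]]; apply: h. Qed.
Lemma idem_tgt_act a (x : T) : idem (tgt a) (act x a) = act x a.
Proof. by case: M_gmod => _ [_ [_ [_ [_ [h _]]]]]; apply: h. Qed.
Lemma deg_subspace i : subspace (deg i).
Proof. by case: M_gmod => _ [_ [_ [_ [_ [_ [h _]]]]]]; apply: h. Qed.
Lemma deg_act i (x : T) a : deg i x -> deg i.+1 (act x a).
Proof. by case: M_gmod => _ [_ [_ [_ [_ [_ [_ [h _]]]]]]] /h []. Qed.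
Lemma deg_idem i (x : T) u : deg i x -> deg i (idem u x).
Proof. by case: M_gmod => _ [_ [_ [_ [_ [_ [_ [h _]]]]]]] /h []. Qed.
Lemma deg_decomposition (x : T) :
  exists n F, (forall i, deg i (F i)) /\ x = \sum_(i < n) F i.
Proof. by case: M_gmod => _ [_ [_ [_ [_ [_ [_ [_ [h _]]]]]]]]; apply: h. Qed.
Lemma deg_sum_eq0 n (F : nat -> T) : (forall i, deg i (F i)) ->
  \sum_(i < n) F i = 0 -> forall i, (i < n)%N -> F i = 0.
Proof. by case: M_gmod => _ [_ [_ [_ [_ [_ [_ [_ [_ h]]]]]]]]; apply: h. Qed.

Lemma act0 a : act 0 a = 0.
Proof.
have := act_linear a 1 0 0; rewrite !scale1r addr0 => dbl.
by apply: (addrI (act 0 a)); rewrite addr0 -dbl.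
Qed.
Lemma actD a x y : act (x + y) a = act x a + act y a.
Proof. by rewrite -{1}[x]scale1r act_linear scale1r. Qed.
Lemma actZ a c x : act (c *: x) a = c *: act x a.
Proof. by rewrite -[c *: x]addr0 act_linear act0 addr0. Qed.
Lemma idem0 u : idem u 0 = 0.
Proof.
have := idem_linear u 1 0 0; rewrite !scale1r addr0 => dbl.
by apply: (addrI (idem u 0)); rewrite addr0 -dbl.
Qed.
Lemma idemD u x y : idem u (x + y) = idem u x + idem u y.
Proof. by rewrite -{1}[x]scale1r idem_linear scale1r. Qed.
Lemma idemZ u c x : idem u (c *: x) = c *: idem u x.
Proof. by rewrite -[c *: x]addr0 idem_linear idem0 addr0. Qed.

Lemma act_sum a n (F : nat -> T) : act (\sum_(i < n) F i) a = \sum_(i < n) act (F i) a.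
Proof. exact: (big_morph (fun x => act x a) (actD a) (act0 a)). Qed.
Lemma idem_sum u n (F : nat -> T) : idem u (\sum_(i < n) F i) = \sum_(i < n) idem u (F i).
Proof. exact: (big_morph (idem u) (idemD u) (idem0 u)). Qed.

Lemma deg0 i : deg i 0. Proof. by case: (deg_subspace i). Qed.
Lemma deg_linear i c x y : deg i x -> deg i y -> deg i (c *: x + y).
Proof. by case: (deg_subspace i) => _; apply. Qed.
Lemma degZ i c x : deg i x -> deg i (c *: x).
Proof. by move=> h; rewrite -[_ *: _]addr0; apply: deg_linear => //; apply: deg0. Qed.
Lemma degB i x y : deg i x -> deg i y -> deg i (x - y).
Proof. by move=> h1 h2; rewrite addrC -scaleN1r; apply: deg_linear. Qed.

Lemma foldl_act0 p : foldl act 0 p = 0.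
Proof. by elim: p => //= a p IH; rewrite act0. Qed.

Lemma deg_foldl_act i x p : deg i x -> deg (i + size p)%N (foldl act x p).
Proof.
elim: p i x => [|a p IH] i x hx /=; first by rewrite addn0.
by rewrite addnS -addSn; apply/IH/deg_act.
Qed.

Definition decomposition (x : T) :=
  constructive_indefinite_description _ (deg_decomposition x).
Definition decomp_len (x : T) : nat := proj1_sig (decomposition x).
Definition decomp_fun (x : T) : nat -> T :=
  proj1_sig (constructive_indefinite_description _ (proj2_sig (decomposition x))).

Lemma decomp_funP x :
  (forall i, deg i (decomp_fun x i)) /\ x = \sum_(i < decomp_len x) decomp_fun x i.
Proof.
exact: (proj2_sig (constructive_indefinite_description _ (proj2_sig (decomposition x)))).
Qed.

Definition component (i : nat) (x : T) : T :=
  if (i < decomp_len x)%N then decomp_fun x i else 0.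

Lemma component_deg i x : deg i (component i x).
Proof. by rewrite /component; case: ifP => _; [apply: (decomp_funP x).1 | apply: deg0]. Qed.

Lemma component_big i x : (decomp_len x <= i)%N -> component i x = 0.
Proof. by rewrite /component leqNgt => /negbTE ->. Qed.

Lemma sum_component N x : (decomp_len x <= N)%N -> x = \sum_(i < N) component i x.
Proof. by move=> h; rewrite -sum_widen // {1}(decomp_funP x).2. Qed.

Lemma component_eq n (F : nat -> T) x : (forall i, deg i (F i)) ->
  x = \sum_(i < n) F i -> forall i, component i x = if (i < n)%N then F i else 0.
Proof.
move=> degF x_eq i; set N := maxn n (decomp_len x).
pose G j := (if (j < n)%N then F j else 0) - component j x.
have degG j : deg j (G j).
  by apply: degB; [case: ifP => _; [apply: degF | apply: deg0] | apply: component_deg].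
have sumG : \sum_(j < N) G j = 0.
  by rewrite sumrB -sum_widen ?leq_maxl // -x_eq -sum_component ?leq_maxr // subrr.
case: (ltnP i N) => iN.
  by apply/esym/eqP; rewrite -subr_eq0; apply/eqP; apply: (deg_sum_eq0 degG sumG iN).
have ni : (n <= i)%N := leq_trans (leq_maxl _ _) iN.
have li : (decomp_len x <= i)%N := leq_trans (leq_maxr _ _) iN.
by rewrite component_big // ltnNge ni.
Qed.

Lemma component_homog i j x : deg j x -> component i x = if i == j then x else 0.
Proof.
move=> hx; rewrite (@component_eq j.+1 (fun m => if m == j then x else 0) x).
- by case: eqP => [->|_]; rewrite ?ltnSn //; case: ifP.
- by move=> m; case: eqP => [->//|_]; apply: deg0.
rewrite big_ord_recr /= eqxx big1 ?add0r // => m _.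
by rewrite (ltn_eqF (ltn_ord m)).
Qed.

Lemma component_linear i c x y : component i (c *: x + y) = c *: component i x + component i y.
Proof.
set N := maxn (decomp_len x) (decomp_len y).
have e : c *: x + y = \sum_(m < N) (c *: component m x + component m y).
  by rewrite big_split /= -scaler_sumr -!sum_component ?leq_maxr ?leq_maxl.
rewrite (component_eq (F := fun m => c *: component m x + component m y) _ e); last first.
  by move=> m; apply: deg_linear; apply: component_deg.
case: ltnP => // h.
have [hx hy] := (leq_trans (leq_maxl _ _) h, leq_trans (leq_maxr _ _) h).
by rewrite !component_big ?scaler0 ?addr0.
Qed.

Lemma component0 i : component i 0 = 0.
Proof. by rewrite (component_eq (n := 0) (F := fun _ => 0)) ?big_ord0 //; apply: deg0. Qed.

Lemma componentD i x y : component i (x + y) = component i x + component i y.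
Proof. by rewrite -{1}[x]scale1r component_linear scale1r. Qed.

Lemma component_act i x a :
  component i (act x a) = if i is i'.+1 then act (component i' x) a else 0.
Proof.
pose F m := if m is m'.+1 then act (component m' x) a else 0.
have degF m : deg m (F m) by case: m => [|m] /=; [apply: deg0 | apply/deg_act/component_deg].
have x_eq : act x a = \sum_(m < (decomp_len x).+1) F m.
  rewrite big_ord_recl /= add0r {1}(sum_component (leqnn (decomp_len x))).
  exact: (act_sum a _ (component^~ x)).
rewrite (component_eq degF x_eq) /F; case: i => [|i] //; rewrite ltnS.
by case: ltnP => // h; rewrite component_big // act0.
Qed.

Lemma component_idem i u x : component i (idem u x) = idem u (component i x).
Proof.
have e : idem u x = \sum_(m < decomp_len x) idem u (component m x).
  by rewrite {1}(sum_component (leqnn (decomp_len x))) (idem_sum u _ (component^~ x)).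
rewrite (component_eq (F := fun m => idem u (component m x)) _ e); last first.
  by move=> m; apply/deg_idem/component_deg.
by case: ltnP => // h; rewrite component_big // idem0.
Qed.

Lemma component_foldl_act_low i z p : (i < size p)%N -> component i (foldl act z p) = 0.
Proof.
elim/last_ind: p i => // p a IH i; rewrite size_rcons foldl_rcons.
by case: i => [|i] hi; rewrite component_act // IH // act0.
Qed.

Lemma pact0 q : pact (M := M) 0 q = 0.
Proof. by rewrite /pact idem0 foldl_act0. Qed.

Lemma zero_gsubmod : gsubmod (fun y : T => y = 0).
Proof.
split.
- by split => // c x y -> ->; rewrite scaler0 addr0.
- by move=> x a ->; apply: act0.
- by move=> x u ->; apply: idem0.
- move=> x ->; exists 0%N, (fun _ => 0); split; last by rewrite big_ord0.
  by move=> i; split => //; apply: deg0.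
Qed.

Lemma torsion_elt0 : torsion_elt (M := M) 0.
Proof. by exists 0%N => q _ _; apply: pact0. Qed.

End GradedModule.

(** * Modules whose tail runs around a cycle *)

Lemma scaler_injr (k : fieldType) (V : lmodType k) (y : V) (c d : k) :
  y != 0 -> c *: y = d *: y -> c = d.
Proof.
move=> y_nz e; apply/eqP; rewrite -subr_eq0.
have : (c - d) *: y == 0 by rewrite scalerBl e subrr.
by rewrite scaler_eq0 (negbTE y_nz) orbF.
Qed.

Section CycleTail.
Variables (k : fieldType) (Q : quiver) (M : gmod k Q).
Hypothesis M_gmod : is_gmod M.
Variables (c : seq (arr Q)) (a0 : arr Q) (n0 : nat) (B : nat -> gcar M).
Local Notation T := (gcar M).
Local Notation deg := (gdeg M).
Local Notation act := (gact M).
Local Notation idem := (gidem M).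
Local Notation O := (cycle_module k c a0).

Hypotheses (B_deg : forall i, deg i (B i)) (B_neq0 : forall i, B i != 0)
  (B_span : forall i y, deg i y -> exists d, y = d *: B i).
Hypotheses
  (B_act : forall i a, (n0 <= i)%N ->
     act (B i) a = if a == cyc c a0 i then B i.+1 else 0)
  (B_idem : forall i u, (n0 <= i)%N ->
     idem u (B i) = if u == visit (cyc c a0) i then B i else 0).

Definition coord i (z : T) : k := epsilon (inhabits 0) (fun d => z = d *: B i).

Lemma coordP i z : deg i z -> z = coord i z *: B i.
Proof. by move/B_span => ex; apply: (epsilon_spec (inhabits 0) (fun d => z = d *: B i)). Qed.

Lemma coordZ i d : coord i (d *: B i) = d.
Proof. by apply/esym/(scaler_injr (B_neq0 i)); rewrite -coordP //; apply/(degZ M_gmod). Qed.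

Lemma coord0 i : coord i 0 = 0.
Proof. by rewrite -(scale0r (B i)) coordZ. Qed.

Definition in_tail (x : T) := forall i, (i < n0)%N -> component M_gmod i x = 0.

Definition to_poly (x : T) : {poly k} :=
  \poly_(i < decomp_len M_gmod x) coord i (component M_gmod i x).

Lemma coef_to_poly x i : (to_poly x)`_i = coord i (component M_gmod i x).
Proof. by rewrite coef_poly; case: ltnP => // h; rewrite component_big ?coord0. Qed.

Lemma component_coord i x : component M_gmod i x = coord i (component M_gmod i x) *: B i.
Proof. exact/coordP/component_deg. Qed.

Lemma in_tail_gsubmod : gsubmod in_tail.
Proof.
split.
- split=> [i _|d x y x_tail y_tail i i_lt]; first exact: component0.
  by rewrite component_linear x_tail // y_tail // scaler0 addr0.
- move=> x a x_tail [|i] i_lt; rewrite component_act // x_tail ?(act0 M_gmod) //.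
  exact: ltnW.
- by move=> x u x_tail i i_lt; rewrite component_idem x_tail // (idem0 M_gmod).
- move=> x x_tail; exists (decomp_len M_gmod x), (component M_gmod ^~ x).
  split; last exact: sum_component.
  move=> i; split=> [|j j_lt]; first exact: component_deg.
  rewrite (component_homog _ j (component_deg M_gmod i x)).
  by case: eqP => [<-|]; first exact: x_tail.
Qed.

Lemma in_tail_torsion_quot : torsion_quot in_tail.
Proof.
move=> x; exists n0 => q _ n0_q i i_lt.
by rewrite /pact component_foldl_act_low // (leq_trans i_lt).
Qed.

Lemma to_poly_linear d x y : to_poly (d *: x + y) = d *: to_poly x + to_poly y.
Proof.
apply/polyP => i; rewrite coefD coefZ !coef_to_poly component_linear.
by rewrite (component_coord i x) (component_coord i y) scalerA -scalerDl !coordZ.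
Qed.

Lemma to_poly_act x a : in_tail x -> to_poly (act x a) = gact O (to_poly x) a.
Proof.
move=> x_tail; apply/polyP => i; rewrite /= coef_cyc_act !coef_to_poly component_act.
case: i => [|i] /=; first exact: coord0.
case: (ltnP i n0) => i_n0; first by rewrite x_tail // (act0 M_gmod) !coord0; case: ifP.
rewrite (component_coord i x) (actZ M_gmod) B_act // eq_sym.
by case: ifP => _; rewrite ?coordZ ?scaler0 ?coord0.
Qed.

Lemma to_poly_idem x u : in_tail x -> to_poly (idem u x) = gidem O u (to_poly x).
Proof.
move=> x_tail; apply/polyP => i; rewrite /= coef_cyc_idem !coef_to_poly component_idem.
case: (ltnP i n0) => i_n0; first by rewrite x_tail // (idem0 M_gmod) !coord0; case: ifP.
rewrite (component_coord i x) (idemZ M_gmod) B_idem // eq_sym.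
by case: ifP => _; rewrite ?coordZ ?scaler0 ?coord0.
Qed.

Lemma to_poly_deg i x : deg i x -> gdeg O i (to_poly x).
Proof.
move=> x_deg; exists (coord i (component M_gmod i x)); apply/polyP => j.
rewrite coef_to_poly coefZ coefXn; case: (eqVneq j i) => [->|ne]; first by rewrite mulr1.
by rewrite mulr0 (component_homog _ j x_deg) (negbTE ne) coord0.
Qed.

Lemma to_poly_eq0 x : to_poly x = 0 -> x = 0.
Proof.
move=> x0; rewrite (sum_component (leqnn (decomp_len M_gmod x))) big1 // => i _.
by rewrite component_coord -coef_to_poly x0 coef0 scale0r.
Qed.

Definition from_poly (z : {poly k}) : T := \sum_(i < size z) z`_i *: B i.

Lemma component_from_poly z i :
  component M_gmod i (from_poly z) = if (i < size z)%N then z`_i *: B i else 0.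
Proof.
apply: (@component_eq _ _ _ M_gmod _ (fun j => z`_j *: B j)) => // j.
exact/(degZ M_gmod)/B_deg.
Qed.

Lemma to_poly_from_poly z : to_poly (from_poly z) = z.
Proof.
apply/polyP => j; rewrite coef_to_poly component_from_poly.
by case: ltnP => h; rewrite ?coordZ // coord0 nth_default.
Qed.

Lemma from_poly_tail (z : {poly k}) :
  (forall i, (i < n0)%N -> z`_i = 0) -> in_tail (from_poly z).
Proof. by move=> z_tail i i_lt; rewrite component_from_poly z_tail // scale0r; case: ifP. Qed.

Variable v : vert Q.
Hypothesis c_cycle : simple_cycle v c.

Lemma qgr_iso_cycle_tail : qgr_iso M O.
Proof.
have O_gmod := cycle_module_gmod k a0 c_cycle.
exists in_tail, (fun y => y = 0), to_poly.
refine (conj _ (conj _ (conj _ (conj _ (conj _ (conj _ (conj _ (conj _ (conj _ _))))))))).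
- exact: in_tail_gsubmod.
- exact: in_tail_torsion_quot.
- exact: zero_gsubmod.
- by move=> y ->; apply: torsion_elt0.
- by move=> d x y _ _; apply: to_poly_linear.
- by move=> x a; apply: to_poly_act.
- by move=> x u; apply: to_poly_idem.
- by move=> i x _; apply: to_poly_deg.
- by move=> x _ /to_poly_eq0 ->; apply: torsion_elt0.
move=> y; exists n0 => q _ n0_q; set z := pact y q.
have z_low i : (i < n0)%N -> z`_i = 0.
  by move=> i_lt; apply: coef_foldl_cyc_act_low; apply: leq_trans n0_q.
exists (from_poly z), 0; split=> //; first exact: from_poly_tail.
by rewrite addr0 to_poly_from_poly.
Qed.

End CycleTail.

(** * Point modules *)

Section PointModule.
Variables (k : fieldType) (Q : quiver) (P : gmod k Q).
Hypothesis P_gmod : is_gmod P.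
Local Notation T := (gcar P).
Local Notation deg := (gdeg P).
Local Notation act := (gact P).
Local Notation idem := (gidem P).

Hypothesis P_gen : forall x : T, exists s : seq (T * qpath Q),
  (forall yq, yq \in s -> deg 0 yq.1 /\ valid_path yq.2) /\
  x = \sum_(yq <- s) pact yq.1 yq.2.
Hypothesis P_dim : forall i, exists x : T, [/\ deg i x, x <> 0 &
  forall y, deg i y -> exists c : k, y = c *: x].

(* Generation in degree 0 means that degree i+1 is spanned by degree i times arrows. *)
Lemma deg_succ_eq0 i x : (forall y a, deg i y -> act y a = 0) -> deg i.+1 x -> x = 0.
Proof.
move=> kill x_deg; have := component_homog P_gmod i.+1 x_deg; rewrite eqxx => <-.
have [s [s_deg ->]] := P_gen x.
rewrite (big_morph _ (componentD P_gmod i.+1) (component0 P_gmod i.+1)) big1_seq //.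
move=> [y [u p]] /andP [_ /s_deg [/= y_deg _]]; rewrite /pact /=.
have z_deg := deg_idem P_gmod u y_deg.
have := deg_foldl_act P_gmod p z_deg; rewrite add0n => f_deg.
rewrite (component_homog _ _ f_deg); case: eqP => // size_p.
move: size_p f_deg; case/lastP: p => [|p a] //; rewrite size_rcons => -[size_p] _.
rewrite foldl_rcons kill //; have := deg_foldl_act P_gmod p z_deg.
by rewrite add0n size_p.
Qed.

Definition basis_vec i : T := proj1_sig (constructive_indefinite_description _ (P_dim i)).

Lemma basis_vecP i : [/\ deg i (basis_vec i), basis_vec i <> 0 &
  forall y, deg i y -> exists c : k, y = c *: basis_vec i].
Proof. exact: (proj2_sig (constructive_indefinite_description _ (P_dim i))). Qed.

Lemma basis_vec_deg i : deg i (basis_vec i). Proof. by case: (basis_vecP i). Qed.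
Lemma basis_vec_neq0 i : basis_vec i != 0. Proof. by case: (basis_vecP i) => _ /eqP. Qed.
Lemma basis_vec_span i y : deg i y -> exists c : k, y = c *: basis_vec i.
Proof. by case: (basis_vecP i) => _ _; apply. Qed.

Lemma deg_span_neq0 i (y z : T) : deg i y -> y != 0 -> deg i z -> exists d, z = d *: y.
Proof.
move=> y_deg y_nz z_deg; have [cy y_eq] := basis_vec_span y_deg.
have [cz ->] := basis_vec_span z_deg.
have cy_nz : cy != 0 by apply: contraNneq y_nz => cy0; rewrite y_eq cy0 scale0r.
by exists (cz / cy); rewrite y_eq scalerA divfK.
Qed.

Lemma exists_idem_neq0 i : exists u, idem u (basis_vec i) != 0.
Proof.
apply: NNPP => H; move/eqP: (basis_vec_neq0 i); apply.
rewrite [basis_vec i](sum_idem P_gmod) big1 // => u _.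
by apply/eqP; apply: contraT => h; exfalso; apply: H; exists u.
Qed.

Definition deg_vertex i := xchoose (exists_idem_neq0 i).

(* Each idempotent acts on the line P_i as a scalar e with e^2 = e, and these
   scalars are orthogonal. *)
Lemma idem_deg i u y : deg i y -> idem u y = if u == deg_vertex i then y else 0.
Proof.
move=> y_deg; set W := deg_vertex i; set b := basis_vec i.
have W_nz : idem W b != 0 := xchooseP (exists_idem_neq0 i).
have [d ->] := basis_vec_span y_deg; rewrite (idemZ P_gmod).
have [e e_eq] := basis_vec_span (deg_idem P_gmod W (basis_vec_deg i)).
have e_nz : e != 0 by apply: contraNneq W_nz => e0; rewrite e_eq e0 scale0r.
have e1 : e = 1.
  have := idem_idem P_gmod W W b; rewrite eqxx {1}e_eq (idemZ P_gmod) e_eq scalerA.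
  by move/(scaler_injr (basis_vec_neq0 i)) => ee; apply: (mulIf e_nz); rewrite mul1r.
case: eqP => [->|/eqP ne]; first by rewrite e_eq e1 scale1r.
have [f f_eq] := basis_vec_span (deg_idem P_gmod u (basis_vec_deg i)).
have := idem_idem P_gmod W u b; rewrite eq_sym (negbTE ne) f_eq (idemZ P_gmod) e_eq e1.
rewrite scale1r => /eqP; rewrite scaler_eq0 (negbTE (basis_vec_neq0 i)) orbF => /eqP ->.
by rewrite scale0r scaler0.
Qed.

Lemma act_neq0_vertices i y a : deg i y -> act y a != 0 ->
  src a = deg_vertex i /\ tgt a = deg_vertex i.+1.
Proof.
move=> y_deg ya_nz; split; apply/eqP; apply: contraNT ya_nz => ne.
  by rewrite (act_idem_src P_gmod) (idem_deg _ y_deg) (negbTE ne) (act0 P_gmod).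
by rewrite -(idem_tgt_act P_gmod) (idem_deg _ (deg_act P_gmod a y_deg)) (negbTE ne).
Qed.

Lemma exists_arrow_act_neq0 i : exists a, act (basis_vec i) a != 0.
Proof.
apply: NNPP => H; move/eqP: (basis_vec_neq0 i.+1); apply.
apply: (deg_succ_eq0 (i := i)) (basis_vec_deg i.+1) => y a /basis_vec_span [d ->].
rewrite (actZ P_gmod); apply/eqP; rewrite scaler_eq0; apply/orP; right.
by apply: contraT => h; exfalso; apply: H; exists a.
Qed.

Definition walk_arrow i := xchoose (exists_arrow_act_neq0 i).

Lemma act_walk_arrow_neq0 i : act (basis_vec i) (walk_arrow i) != 0.
Proof. exact: xchooseP (exists_arrow_act_neq0 i). Qed.

Lemma walk_arrow_vertices i :
  src (walk_arrow i) = deg_vertex i /\ tgt (walk_arrow i) = deg_vertex i.+1.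
Proof. exact: act_neq0_vertices (basis_vec_deg i) (act_walk_arrow_neq0 i). Qed.

Lemma walk_arrow_link i : tgt (walk_arrow i) = src (walk_arrow i.+1).
Proof. by rewrite (walk_arrow_vertices i).2 (walk_arrow_vertices i.+1).1. Qed.

Lemma visit_walk_arrow i : visit walk_arrow i = deg_vertex i.
Proof. exact: (walk_arrow_vertices i).1. Qed.

Lemma act_walk_arrow_neq0_deg i y : deg i y -> y != 0 -> act y (walk_arrow i) != 0.
Proof.
move=> y_deg y_nz; have [d y_eq] := basis_vec_span y_deg.
have d_nz : d != 0 by apply: contraNneq y_nz => d0; rewrite y_eq d0 scale0r.
by rewrite y_eq (actZ P_gmod) scaler_eq0 negb_or d_nz act_walk_arrow_neq0.
Qed.

Section EventualCycle.
Variables (n0 l : nat).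
Local Notation c := (segment walk_arrow n0 l).
Local Notation a0 := (walk_arrow 0).
Hypotheses
  (walk_periodic : forall i, (n0 <= i)%N -> walk_arrow i = nth a0 c (i %% l))
  (walk_arrow_unique : forall i a, (n0 <= i)%N ->
     src a = visit walk_arrow i -> tgt a = visit walk_arrow i.+1 -> a = walk_arrow i).

Lemma cyc_walk_arrow i : (n0 <= i)%N -> cyc c a0 i = walk_arrow i.
Proof. by move=> n0_i; rewrite (walk_periodic n0_i) /cyc size_segment. Qed.

Fixpoint walk_vec j : T :=
  if j is j'.+1 then act (walk_vec j') (walk_arrow (n0 + j')) else basis_vec n0.

Lemma walk_vecP j : deg (n0 + j) (walk_vec j) /\ walk_vec j != 0.
Proof.
elim: j => [|j [j_deg j_nz]] /=.
  by rewrite addn0; split; [apply: basis_vec_deg | apply: basis_vec_neq0].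
by rewrite addnS; split; [apply: deg_act | apply: act_walk_arrow_neq0_deg].
Qed.

Definition tail_basis i := if (n0 <= i)%N then walk_vec (i - n0) else basis_vec i.

Lemma tail_basis_deg i : deg i (tail_basis i).
Proof.
rewrite /tail_basis; case: ifP => [n0_i|_]; last exact: basis_vec_deg.
by rewrite -{1}(subnKC n0_i); case: (walk_vecP (i - n0)).
Qed.

Lemma tail_basis_neq0 i : tail_basis i != 0.
Proof.
by rewrite /tail_basis; case: ifP => _; [case: (walk_vecP (i - n0)) | apply: basis_vec_neq0].
Qed.

Lemma tail_basis_span i y : deg i y -> exists d, y = d *: tail_basis i.
Proof. exact: deg_span_neq0 (tail_basis_deg i) (tail_basis_neq0 i). Qed.

Lemma tail_basis_act i a : (n0 <= i)%N ->
  act (tail_basis i) a = if a == cyc c a0 i then tail_basis i.+1 else 0.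
Proof.
move=> n0_i; rewrite cyc_walk_arrow //.
have succ : tail_basis i.+1 = act (tail_basis i) (walk_arrow i).
  by rewrite /tail_basis n0_i (leq_trans n0_i) // subSn //= subnKC.
case: eqP => [->|ne]; first by rewrite succ.
apply/eqP; apply: contraT => a_nz; exfalso; apply: ne.
have [sa ta] := act_neq0_vertices (tail_basis_deg i) a_nz.
by apply: walk_arrow_unique; rewrite // visit_walk_arrow.
Qed.

Lemma tail_basis_idem i u : (n0 <= i)%N ->
  idem u (tail_basis i) = if u == visit (cyc c a0) i then tail_basis i else 0.
Proof.
move=> n0_i; rewrite (idem_deg _ (tail_basis_deg i)).
by rewrite /visit cyc_walk_arrow // -/(visit _ i) visit_walk_arrow.
Qed.

Lemma point_module_qgr_iso : simple_cycle (visit walk_arrow n0) c ->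
  qgr_iso P (cycle_module k c a0).
Proof.
exact: (qgr_iso_cycle_tail P_gmod tail_basis_deg tail_basis_neq0 tail_basis_span
  tail_basis_act tail_basis_idem).
Qed.

End EventualCycle.

End PointModule.

Theorem proposition5p5 (k : fieldType) (Q : quiver) (P : gmod k Q) :
  finite_GKdim Q -> point_module P ->
  exists (v : vert Q) (c : seq (arr Q)), simple_cycle v c /\
    exists O : gmod k Q, is_Ov v c O /\ qgr_iso P O.
Proof.
move=> GK [P_gmod P_gen P_dim].
set al := walk_arrow P_gmod P_gen P_dim.
have [n0 [l [c_cycle al_periodic al_unique]]] :=
  walk_eventually_cycles (walk_arrow_link P_gmod P_gen P_dim) GK.
exists (visit al n0), (segment al n0 l); split=> //.
exists (cycle_module k (segment al n0 l) (al 0)); split; first exact: cycle_module_Ov.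
exact: point_module_qgr_iso al_periodic al_unique c_cycle.
Qed.
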